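(* Let $S=\{v_1,\ldots,v_n\}\subset\mathbb Z^n$ be an orthogonal subset with Wu element $W=\sum_{i=1}^n v_i=\sum_{i=1}^n k_ie_i$, and let $R_o=\{i: k_i\equiv1\pmod2\}$. If $I(S)>n-3|R_o|$, then the lattice generated by $S$ is not cubiquitous.
   Context: $\mathbb Z^n$ carries the standard dot product with standard basis $e_1,\ldots,e_n$. $a_i=\langle v_i,v_i\rangle$ and $I(S)=\sum_{i=1}^n(a_i-3)$. $S$ is orthogonal if $a_i\ge1$ for all $i$ and $\langle v_i,v_j\rangle=0$ for all $i\ne j$. A full-rank sublattice $\Lambda\subset\mathbb Z^n$ is cubiquitous if $\Lambda\cap(x+\{0,1\}^n)\ne\emptyset$ for every $x\in\mathbb Z^n$. *)

From mathcomp Require Import all_boot all_order all_algebra.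
Set Implicit Arguments. Unset Strict Implicit. Unset Printing Implicit Defensive.
Import Order.TTheory GRing.Theory Num.Theory.
Local Open Scope ring_scope.

(* Vectors of Z^n are functions 'I_n -> int; a family S = {v_1..v_n} is
   v : 'I_n -> ('I_n -> int). *)

Definition dot (n : nat) (u w : 'I_n -> int) : int := \sum_(j < n) u j * w j.

Definition sqnorm (n : nat) (v : 'I_n -> 'I_n -> int) (i : 'I_n) : int :=
  dot (v i) (v i).

Definition Iinv (n : nat) (v : 'I_n -> 'I_n -> int) : int :=
  \sum_(i < n) (sqnorm v i - 3).

Definition orthogonal_set (n : nat) (v : 'I_n -> 'I_n -> int) : Prop :=
  (forall i, 1 <= sqnorm v i) /\ (forall i j, i != j -> dot (v i) (v j) = 0).

Definition wu (n : nat) (v : 'I_n -> 'I_n -> int) : 'I_n -> int :=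
  fun j => \sum_(i < n) v i j.

Definition Ro (n : nat) (v : 'I_n -> 'I_n -> int) : {set 'I_n} :=
  [set j | ~~ (2 %| wu v j)%Z].

Definition lattice_gen (n : nat) (v : 'I_n -> 'I_n -> int) (y : 'I_n -> int) : Prop :=
  exists c : 'I_n -> int, forall j, y j = \sum_(i < n) c i * v i j.

Definition cubiquitous (n : nat) (L : ('I_n -> int) -> Prop) : Prop :=
  forall x : 'I_n -> int, exists y, L y /\
    forall j, y j - x j = 0 \/ y j - x j = 1.

From mathcomp Require Import all_boot all_order all_algebra.
From mathcomp Require Import zify ring.
Set Implicit Arguments. Unset Strict Implicit. Unset Printing Implicit Defensive.
Import Order.TTheory GRing.Theory Num.Theory.
Local Open Scope ring_scope.

(* If the lattice were cubiquitous, some lattice point y would lie in the cube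
   at floor(W/2). Then z = W - 2y is a combination of the v_i with odd
   coefficients, so |z|^2 = sum b_i^2 a_i >= sum a_i by orthogonality, while
   coordinatewise z_j is in {0, +-2} for k_j even and +-1 for k_j odd, so
   |z|^2 <= 4 n - 3 |R_o|.  Together: I(S) = sum a_i - 3 n <= n - 3 |R_o|. *)

Definition lincomb (m n : nat) (b : 'I_m -> int) (v : 'I_m -> 'I_n -> int) :
  'I_n -> int := fun j => \sum_(i < m) b i * v i j.

Lemma dot_lincomb_orthogonal (m n : nat) (v : 'I_m -> 'I_n -> int)
    (b : 'I_m -> int) :
  (forall i k, i != k -> dot (v i) (v k) = 0) ->
  dot (lincomb b v) (lincomb b v) = \sum_(i < m) b i ^+ 2 * dot (v i) (v i).
Proof.
move=> orth; rewrite /dot /lincomb.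
under eq_bigr => j _ do rewrite mulr_suml.
under eq_bigr => j _ do under eq_bigr => i _ do rewrite mulr_sumr.
rewrite exchange_big /=; apply: eq_bigr => i _.
rewrite exchange_big /= (bigD1 i) //= [X in _ + X]big1 ?addr0.
  by rewrite mulr_sumr; apply: eq_bigr => j _; ring.
move=> k nki; have := orth i k; rewrite eq_sym nki => /(_ isT) vik0.
transitivity (b i * b k * dot (v i) (v k)); last by rewrite vik0 mulr0.
by rewrite /dot mulr_sumr; apply: eq_bigr => j _; ring.
Qed.

Lemma sqr_odd_ge1 (c : int) : 1 <= (1 - 2 * c) ^+ 2.
Proof. nia. Qed.

Lemma sqr_sub_double_le (k y : int) :
  y - (k %/ 2)%Z = 0 \/ y - (k %/ 2)%Z = 1 ->
  (k - 2 * y) ^+ 2 <= if (2 %| k)%Z then 4 else 1.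
Proof.
move=> yk; have kE := divz_eq k 2.
have r_ge0 := modz_ge0 k (isT : (2 : int) != 0).
have r_lt2 := ltz_pmod k (isT : (0 : int) < 2).
case: dvdz_mod0P => [r0 | r1].
- have : k - 2 * y = 0 \/ k - 2 * y = -2 by lia.
  by case=> ->.
- have : k - 2 * y = 1 \/ k - 2 * y = -1 by lia.
  by case=> ->.
Qed.

Lemma sumr_if_mem (n : nat) (A : {set 'I_n}) (a b : int) :
  \sum_(j < n) (if j \in A then a else b) = a * #|A|%:Z + b * (n%:Z - #|A|%:Z).
Proof.
rewrite (bigID (mem A)) /=.
under eq_bigr => j -> do [].
under [X in _ + X]eq_bigr => j /negbTE -> do [].
rewrite !sumr_const.
have -> : #|(fun i : 'I_n => i \notin A)| = (n - #|A|)%N.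
  have := cardsC A; rewrite card_ord => /(congr1 (subn^~ #|A|)); rewrite addKn => <-.
  by apply: eq_card => i; rewrite inE.
have := max_card A; rewrite card_ord => /subzn ->.
by rewrite -[a *+ _]mulr_natr -[b *+ _]mulr_natr !natz.
Qed.

Lemma cubiquitous_sqnorm_sum_le (n : nat) (v : 'I_n -> 'I_n -> int) :
  orthogonal_set v -> cubiquitous (lattice_gen v) ->
  \sum_(i < n) sqnorm v i <= 4 * n%:Z - 3 * #|Ro v|%:Z.
Proof.
move=> [a_ge1 orth] cub.
have [y [[c yE] y_cube]] := cub (fun j => (wu v j %/ 2)%Z).
pose b i := 1 - 2 * c i.
have zE j : lincomb b v j = wu v j - 2 * y j.
  by rewrite /lincomb yE /wu mulr_sumr -sumrB; apply: eq_bigr => i _; rewrite /b; ring.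
have norm_ge : \sum_(i < n) sqnorm v i <= dot (lincomb b v) (lincomb b v).
  rewrite dot_lincomb_orthogonal //; apply: ler_sum => i _.
  by rewrite ler_pMl ?sqr_odd_ge1 // (lt_le_trans _ (a_ge1 i)).
have norm_le : dot (lincomb b v) (lincomb b v)
               <= \sum_(j < n) (if j \in Ro v then 1 else 4).
  apply: ler_sum => j _; rewrite zE -expr2 /Ro inE if_neg.
  exact: sqr_sub_double_le.
have count_Ro : \sum_(j < n) (if j \in Ro v then 1 else 4)
                = 4 * n%:Z - 3 * #|Ro v|%:Z.
  by rewrite sumr_if_mem; ring.
by rewrite -count_Ro (le_trans norm_ge norm_le).
Qed.

Theorem corollary2p6 (n : nat) (v : 'I_n -> 'I_n -> int) :
  orthogonal_set v ->
  (n%:Z - 3 * (#|Ro v|)%:Z < Iinv v) ->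
  ~ cubiquitous (lattice_gen v).
Proof.
move=> orth I_gt cub.
have Iv : Iinv v = \sum_(i < n) sqnorm v i - 3 * n%:Z.
  by rewrite /Iinv sumrB sumr_const card_ord -[n%:Z]natz mulr_natr.
have := cubiquitous_sqnorm_sum_le orth cub.
rewrite Iv in I_gt; lia.
Qed.
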